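(* Let $L>0$, $K>0$ and let $p\in C^{0,1}([0,L],\mathbb{R}^d)$ be the arc length parametrisation of an (open) polygon with vertices $p(a_0),\dots,p(a_n)$, $0=a_0<a_1<\dots<a_n=L$, such that $\mathrm{maxCurv}_2(p)\le K$ and $KL\le\pi$. Let $\eta:[0,L]\to\mathbb{R}^d$ be the arc length parametrisation of (an arc of) a circle of curvature $K$. Then $$|\eta(L)-\eta(0)|<|p(L)-p(0)|.$$
   Context: For an open polygon $p$ with vertices $y_k=p(a_k)$, the discrete curvature at an interior vertex $y_k$ ($1\le k\le n-1$) is $\kappa_{d,2}(y_{k-1},y_k,y_{k+1})=\frac{\phi_k}{(|y_{k-1}-y_k|+|y_{k+1}-y_k|)/2}$, where $\phi_k=\measuredangle(y_k-y_{k-1},y_{k+1}-y_k)\in[0,\pi]$ is the exterior angle at $y_k$; $\mathrm{maxCurv}_2(p)$ is the maximum of $\kappa_{d,2}$ over all interior vertices (and $0$ if there are none). *)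

(* Stdlib Reals. Points of R^d are represented as functions nat -> R,
   only coordinates 0..d-1 being relevant. *)
From Stdlib Require Import Reals Lra Lia.
Open Scope R_scope.

Definition vec := nat -> R.

Fixpoint sumd (d : nat) (f : nat -> R) : R :=
  match d with O => 0 | S d' => sumd d' f + f d' end.

Definition dot (d : nat) (u v : vec) : R := sumd d (fun i => u i * v i).
Definition norm (d : nat) (u : vec) : R := sqrt (dot d u u).
Definition vsub (u v : vec) : vec := fun i => u i - v i.

Definition angle (d : nat) (u v : vec) : R :=
  acos (dot d u v / (norm d u * norm d v)).

Definition kappa_d2 (d : nat) (x y z : vec) : R :=
  angle d (vsub y x) (vsub z y) / ((norm d (vsub x y) + norm d (vsub z y)) / 2).

Fixpoint maxCurv_aux (d : nat) (y : nat -> vec) (m : nat) : R :=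
  match m with
  | O => 0
  | S m' => Rmax (maxCurv_aux d y m') (kappa_d2 d (y m') (y (S m')) (y (S (S m'))))
  end.

(* maxCurv_2 of the polygon with vertices y_0, ..., y_n : max over interior
   vertices 1 <= k <= n-1, and 0 if there are none *)
Definition maxCurv2 (d n : nat) (y : nat -> vec) : R := maxCurv_aux d y (n - 1).

Definition is_arclength_polygon (d n : nat) (a : nat -> R) (L : R) (p : R -> vec) : Prop :=
  a O = 0 /\ a n = L /\
  (forall k, (k < n)%nat -> a k < a (S k)) /\
  (forall k, (k < n)%nat ->
     norm d (vsub (p (a (S k))) (p (a k))) = a (S k) - a k) /\
  (forall k t i, (k < n)%nat -> a k <= t <= a (S k) -> (i < d)%nat ->
     p t i = p (a k) i + (t - a k) / (a (S k) - a k) * (p (a (S k)) i - p (a k) i)).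

Definition is_arclength_circle_arc (d : nat) (K L : R) (eta : R -> vec) : Prop :=
  exists (c e1 e2 : vec) (th0 : R),
    dot d e1 e1 = 1 /\ dot d e2 e2 = 1 /\ dot d e1 e2 = 0 /\
    (forall t i, 0 <= t <= L -> (i < d)%nat ->
       eta t i = c i + (cos (th0 + K * t) * e1 i + sin (th0 + K * t) * e2 i) / K).

(* Let y_0, ..., y_n be the vertices, at arc-length parameters a_k; segment k
   has length l_k, unit direction tau_k and midpoint parameter m_k.  The bound
   kappa_{d,2} <= K at vertex k+1 says that the angle between tau_k and
   tau_(k+1) is at most K (m_(k+1) - m_k).  Chaining spherical triangle
   inequalities, and interpolating on a great circle where the midpoints cross
   the center L/2, yields a unit vector e with angle (tau_k, e) <= K |m_k - L/2|
   for every k ("central direction").  Projecting onto e,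
     |y_n - y_0| >= sum_k l_k <tau_k, e> >= sum_k l_k cos (K (m_k - L/2))
                 >  sum_k 2 sin (K l_k / 2) cos (K (m_k - L/2)) / K
                 =  2 sin (K L / 2) / K,
   the last sum telescoping; this is the chord of the circular arc. *)

From Stdlib Require Import Reals Lra Lia Psatz.
Open Scope R_scope.

Lemma sumd_ext d f g : (forall i, (i < d)%nat -> f i = g i) -> sumd d f = sumd d g.
Proof.
  induction d as [|d IH]; intros H; simpl; [reflexivity|].
  rewrite IH by (intros; apply H; lia). rewrite H by lia. reflexivity.
Qed.

Lemma sumd_plus d f g : sumd d (fun i => f i + g i) = sumd d f + sumd d g.
Proof. induction d as [|d IH]; simpl; [lra|]. rewrite IH; lra. Qed.

Lemma sumd_scal d c f : sumd d (fun i => c * f i) = c * sumd d f.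
Proof. induction d as [|d IH]; simpl; [lra|]. rewrite IH; lra. Qed.

Lemma sumd_lt n f g :
  (0 < n)%nat -> (forall k, (k < n)%nat -> f k < g k) -> sumd n f < sumd n g.
Proof.
  induction n as [|n IH]; simpl; intros Hn H; [lia|].
  assert (f n < g n) by (apply H; lia).
  destruct n as [|n]; [simpl; lra|].
  assert (sumd (S n) f < sumd (S n) g) by (apply IH; [lia | intros; apply H; lia]).
  lra.
Qed.

Lemma sumd_swap d n (f : nat -> nat -> R) :
  sumd d (fun i => sumd n (fun k => f k i)) = sumd n (fun k => sumd d (fun i => f k i)).
Proof.
  induction n as [|n IH]; simpl.
  - induction d as [|d IHd]; simpl; lra.
  - rewrite sumd_plus, IH. reflexivity.
Qed.

Lemma sumd_telescope n (g : nat -> R) : sumd n (fun k => g (S k) - g k) = g n - g O.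
Proof. induction n as [|n IH]; simpl; [lra|]. rewrite IH; lra. Qed.

Lemma dot_comm d u v : dot d u v = dot d v u.
Proof. unfold dot. apply sumd_ext. intros; lra. Qed.

Lemma dot_lin_l d al be u v w :
  dot d (fun i => al * u i + be * v i) w = al * dot d u w + be * dot d v w.
Proof. unfold dot. rewrite <- !sumd_scal, <- sumd_plus. apply sumd_ext; intros; lra. Qed.

Lemma dot_lin_r d al be u v w :
  dot d w (fun i => al * u i + be * v i) = al * dot d w u + be * dot d w v.
Proof. rewrite dot_comm, dot_lin_l, (dot_comm d u), (dot_comm d v). reflexivity. Qed.

Lemma dot_scal_l d c u w : dot d (fun i => c * u i) w = c * dot d u w.
Proof. unfold dot. rewrite <- sumd_scal. apply sumd_ext; intros; ring. Qed.

Lemma dot_lin2 d al be ga de u v w z :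
  dot d (fun i => al * u i + be * v i) (fun i => ga * w i + de * z i) =
  al * ga * dot d u w + al * de * dot d u z + be * ga * dot d v w + be * de * dot d v z.
Proof. rewrite dot_lin_l, !dot_lin_r. ring. Qed.

Lemma dot_nonneg d u : 0 <= dot d u u.
Proof.
  unfold dot. induction d as [|d IH]; simpl; [lra|].
  pose proof (Rle_0_sqr (u d)). unfold Rsqr in *. lra.
Qed.

(* Cauchy-Schwarz, from the positivity of |B u - C v|^2 = B (A B - C^2),
   its mirror image, and of |u +- v|^2 when A = B = 0. *)
Lemma cauchy_schwarz d u v : dot d u v ^ 2 <= dot d u u * dot d v v.
Proof.
  set (A := dot d u u). set (B := dot d v v). set (C := dot d u v).
  assert (HA : 0 <= A) by apply dot_nonneg.
  assert (HB : 0 <= B) by apply dot_nonneg.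
  assert (Hv : 0 <= B * (A * B - C ^ 2)).
  { pose proof (dot_nonneg d (fun i => B * u i + (- C) * v i)) as H.
    rewrite dot_lin2, (dot_comm d v u) in H. fold A B C in H. nra. }
  assert (Hu : 0 <= A * (A * B - C ^ 2)).
  { pose proof (dot_nonneg d (fun i => A * v i + (- C) * u i)) as H.
    rewrite dot_lin2, (dot_comm d v u) in H. fold A B C in H. nra. }
  assert (Hplus : 0 <= A + 2 * C + B).
  { pose proof (dot_nonneg d (fun i => 1 * u i + 1 * v i)) as H.
    rewrite dot_lin2, (dot_comm d v u) in H. fold A B C in H. lra. }
  assert (Hminus : 0 <= A - 2 * C + B).
  { pose proof (dot_nonneg d (fun i => 1 * u i + (- 1) * v i)) as H.
    rewrite dot_lin2, (dot_comm d v u) in H. fold A B C in H. lra. }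
  destruct (Rlt_dec 0 B) as [B0 | B0]; [nra|].
  destruct (Rlt_dec 0 A) as [A0 | A0]; nra.
Qed.

Lemma unit_dot_bound d u v : dot d u u = 1 -> dot d v v = 1 -> -1 <= dot d u v <= 1.
Proof.
  intros Hu Hv. pose proof (cauchy_schwarz d u v) as H.
  rewrite Hu, Hv in H. nra.
Qed.

Lemma abs_le_sqrt_of_sq_le z P : z ^ 2 <= P -> - sqrt P <= z <= sqrt P.
Proof.
  intros H. assert (Habs : Rabs z <= sqrt P).
  { rewrite <- sqrt_Rsqr_abs. apply sqrt_le_1_alt. unfold Rsqr. lra. }
  unfold Rabs in Habs. destruct (Rcase_abs z); lra.
Qed.

Lemma dot_unit_le_norm d v e : dot d e e = 1 -> dot d v e <= norm d v.
Proof.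
  intros He. apply abs_le_sqrt_of_sq_le.
  pose proof (cauchy_schwarz d v e) as H. rewrite He in H. lra.
Qed.

Lemma cos_antitone x y : 0 <= x -> x <= y -> y <= PI -> cos y <= cos x.
Proof.
  intros. destruct (Req_dec x y) as [E|NE]; [subst; lra|].
  left. apply cos_decreasing_1; lra.
Qed.

Lemma acos_le_of_cos_le x b : -1 <= x <= 1 -> 0 <= b <= PI -> cos b <= x -> acos x <= b.
Proof.
  intros Hx Hb H. pose proof (acos_bound x).
  destruct (Rle_dec (acos x) b) as [|Hgt]; [assumption|].
  assert (cos (acos x) < cos b) by (apply cos_decreasing_1; lra).
  rewrite cos_acos in * by lra. lra.
Qed.

Lemma cos_le_of_acos_le x b : -1 <= x <= 1 -> acos x <= b -> b <= PI -> cos b <= x.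
Proof.
  intros Hx Hle Hb. pose proof (acos_bound x).
  rewrite <- (cos_acos x) by assumption. apply cos_antitone; lra.
Qed.

(* [angle_within d u v a]: for unit vectors u, v and 0 <= a <= PI, the angle
   between u and v is at most a.  Phrased through cos to avoid acos. *)
Definition angle_within (d : nat) (u v : vec) (a : R) : Prop := cos a <= dot d u v.

Lemma angle_within_sym d u v a : angle_within d u v a -> angle_within d v u a.
Proof. unfold angle_within. rewrite dot_comm. trivial. Qed.

Lemma angle_within_opp d u v a : angle_within d u v a -> angle_within d u v (- a).
Proof. unfold angle_within. rewrite cos_neg. trivial. Qed.

Lemma angle_within_refl d u a : dot d u u = 1 -> angle_within d u u a.
Proof. intros Hu. unfold angle_within. rewrite Hu. apply COS_bound. Qed.

Lemma angle_within_weaken d u v a b :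
  0 <= a -> a <= b -> b <= PI -> angle_within d u v a -> angle_within d u v b.
Proof. unfold angle_within. intros. pose proof (cos_antitone a b). lra. Qed.

(* Spherical triangle inequality.  Writing x = <u,v>, y = <v,w>, the components
   of u and w orthogonal to v give <u,w> >= x y - sqrt(1-x^2) sqrt(1-y^2)
   = cos (acos x + acos y). *)
Lemma angle_within_trans d u v w a b :
  dot d u u = 1 -> dot d v v = 1 -> dot d w w = 1 ->
  0 <= a -> 0 <= b -> a + b <= PI ->
  angle_within d u v a -> angle_within d v w b -> angle_within d u w (a + b).
Proof.
  unfold angle_within. intros Hu Hv Hw Ha Hb Hab Huv Hvw.
  pose proof (unit_dot_bound d u v Hu Hv) as Bx.
  pose proof (unit_dot_bound d v w Hv Hw) as By.
  set (x := dot d u v) in *. set (y := dot d v w) in *.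
  assert (Hperp : x * y - sqrt (1 - x²) * sqrt (1 - y²) <= dot d u w).
  { set (u' := fun i => 1 * u i + (- x) * v i).
    set (w' := fun i => 1 * w i + (- y) * v i).
    assert (E1 : dot d u' u' = 1 - x²).
    { unfold u', Rsqr. rewrite dot_lin2, Hu, Hv, (dot_comm d v u). fold x. ring. }
    assert (E2 : dot d w' w' = 1 - y²).
    { unfold w', Rsqr. rewrite dot_lin2, Hw, Hv, (dot_comm d w v). fold y. ring. }
    assert (E3 : dot d u' w' = dot d u w - x * y).
    { unfold u', w'. rewrite dot_lin2, Hv. fold x y. ring. }
    pose proof (cauchy_schwarz d u' w') as C. rewrite E1, E2, E3 in C.
    assert (0 <= 1 - x²) by (unfold Rsqr; nra).
    assert (0 <= 1 - y²) by (unfold Rsqr; nra).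
    rewrite <- sqrt_mult by assumption.
    pose proof (abs_le_sqrt_of_sq_le (dot d u w - x * y) ((1 - x²) * (1 - y²)) C).
    lra. }
  assert (Hsum : cos (acos x + acos y) = x * y - sqrt (1 - x²) * sqrt (1 - y²))
    by (rewrite cos_plus, !cos_acos, !sin_acos by lra; reflexivity).
  assert (acos x <= a) by (apply acos_le_of_cos_le; lra).
  assert (acos y <= b) by (apply acos_le_of_cos_le; lra).
  pose proof (acos_bound x). pose proof (acos_bound y).
  pose proof (cos_antitone (acos x + acos y) (a + b)). lra.
Qed.

(* Geodesic interpolation: if <u,v> = cos ph with sin ph <> 0, the point of the
   great circle through u and v at angle s from u is a unit vector e with
   <e,u> = cos s and <e,v> = cos (ph - s). *)
Lemma slerp_angles d u v ph s :
  dot d u u = 1 -> dot d v v = 1 -> dot d u v = cos ph -> sin ph <> 0 ->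
  let e := fun i => sin (ph - s) / sin ph * u i + sin s / sin ph * v i in
  dot d e e = 1 /\ dot d e u = cos s /\ dot d e v = cos (ph - s).
Proof.
  intros Hu Hv Huv Hs e.
  assert (Eu : dot d e u = cos s).
  { unfold e. rewrite dot_lin_l, Hu, (dot_comm d v u), Huv, sin_minus. field. exact Hs. }
  assert (Ev : dot d e v = cos (ph - s)).
  { unfold e. rewrite dot_lin_l, Hv, Huv, sin_minus, cos_minus.
    pose proof (sin2_cos2 ph) as P. unfold Rsqr in P.
    apply (Rmult_eq_reg_r (sin ph)); [|exact Hs].
    field_simplify; [|exact Hs].
    replace (cos ph ^ 2) with (1 - sin ph ^ 2) by lra. ring. }
  split; [|split]; try assumption.
  unfold e at 1. rewrite dot_lin_l, (dot_comm d u e), (dot_comm d v e), Eu, Ev.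
  assert (Hph : sin (ph - s) * cos s + cos (ph - s) * sin s = sin ph)
    by (rewrite <- sin_plus; f_equal; ring).
  replace (sin (ph - s) / sin ph * cos s + sin s / sin ph * cos (ph - s))
    with ((sin (ph - s) * cos s + cos (ph - s) * sin s) / sin ph) by (field; exact Hs).
  rewrite Hph. field. exact Hs.
Qed.

Lemma angle_within_split d u v al be :
  dot d u u = 1 -> dot d v v = 1 -> 0 <= al -> 0 <= be -> al + be < PI ->
  angle_within d u v (al + be) ->
  exists e, dot d e e = 1 /\ angle_within d e u al /\ angle_within d e v be.
Proof.
  intros Hu Hv Hal Hbe Hab Huv.
  pose proof (unit_dot_bound d u v Hu Hv) as Bx.
  set (ph := acos (dot d u v)).
  assert (Hph : ph <= al + be) by (apply acos_le_of_cos_le; [assumption | lra | exact Huv]).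
  assert (Bph : 0 <= ph <= PI) by apply acos_bound.
  assert (Cph : dot d u v = cos ph) by (symmetry; apply cos_acos; assumption).
  destruct (Req_dec ph 0) as [E | NE].
  - exists u. split; [exact Hu|]. split; [apply angle_within_refl; exact Hu|].
    unfold angle_within. rewrite Cph, E, cos_0. apply COS_bound.
  - assert (Sph : 0 < sin ph) by (apply sin_gt_0; lra).
    set (s := Rmin ph al).
    assert (Hs : 0 <= s <= al /\ s <= ph /\ ph - s <= be)
      by (unfold s, Rmin; destruct Rle_dec; lra).
    destruct (slerp_angles d u v ph s Hu Hv Cph ltac:(lra)) as [He [Heu Hev]].
    eexists. split; [exact He|]. split.
    + apply (angle_within_weaken d _ _ s); try lra.
      unfold angle_within. rewrite Heu. lra.
    + apply (angle_within_weaken d _ _ (ph - s)); try lra.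
      unfold angle_within. rewrite Hev. lra.
Qed.

Lemma crossing_index (m : nat -> R) c N :
  m O <= c -> c < m N -> exists j, (j < N)%nat /\ m j <= c <= m (S j).
Proof.
  intros H0. induction N as [|N IH]; intros HN; [lra|].
  destruct (Rle_dec (m N) c) as [Hle | Hgt].
  - exists N. split; [lia | lra].
  - destruct (IH ltac:(lra)) as [j [Hj Hc]]. exists j. split; [lia | exact Hc].
Qed.

(* If all positions lie within PI/(2K) of c,
   there is a unit vector e with angle (tau_k, e) <= K |m_k - c| for all k: the
   direction the tangents would have at c on a circle of curvature K. *)
Section CentralDirection.

Variables (d n : nat) (tau : nat -> vec) (m : nat -> R) (K c : R).
Hypothesis K_nonneg : 0 <= K.
Hypothesis tau_unit : forall k, (k < n)%nat -> dot d (tau k) (tau k) = 1.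
Hypothesis m_step : forall k, (S k < n)%nat -> m k <= m (S k).
Hypothesis m_near_c : forall k, (k < n)%nat -> - (PI / 2) < K * (m k - c) < PI / 2.
Hypothesis tau_turn :
  forall k, (S k < n)%nat -> angle_within d (tau k) (tau (S k)) (K * (m (S k) - m k)).

Lemma m_mono j k : (j <= k < n)%nat -> m j <= m k.
Proof.
  intros [Hjk Hk]. induction Hjk as [|k Hjk IH]; [lra|].
  pose proof (m_step k Hk). pose proof (IH ltac:(lia)). lra.
Qed.

Lemma tangent_spread j k :
  (j <= k < n)%nat -> angle_within d (tau j) (tau k) (K * (m k - m j)).
Proof.
  intros [Hjk Hk]. induction Hjk as [|k Hjk IH].
  - apply angle_within_refl, tau_unit; lia.
  - replace (K * (m (S k) - m j)) with (K * (m k - m j) + K * (m (S k) - m k)) by ring.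
    pose proof (m_mono j k ltac:(lia)). pose proof (m_step k Hk).
    pose proof (m_near_c j ltac:(lia)). pose proof (m_near_c (S k) Hk).
    apply (angle_within_trans d _ (tau k)); try (apply tau_unit; lia);
      try (apply IH; lia); try (apply tau_turn; lia); nra.
Qed.

Lemma pivot_backward e j :
  dot d e e = 1 -> (j < n)%nat -> m j <= c -> angle_within d (tau j) e (K * (c - m j)) ->
  forall k, (k <= j)%nat -> angle_within d (tau k) e (K * (m k - c)).
Proof.
  intros He Hj Hmj Hje k Hk.
  replace (K * (m k - c)) with (- (K * (m j - m k) + K * (c - m j))) by ring.
  apply angle_within_opp.
  pose proof (m_mono k j ltac:(lia)). pose proof (m_near_c k ltac:(lia)).
  apply (angle_within_trans d _ (tau j)); try (apply tau_unit; lia);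
    try (apply tangent_spread; lia); try assumption; nra.
Qed.

Lemma pivot_forward e j :
  dot d e e = 1 -> (j < n)%nat -> c <= m j -> angle_within d (tau j) e (K * (m j - c)) ->
  forall k, (j <= k < n)%nat -> angle_within d (tau k) e (K * (m k - c)).
Proof.
  intros He Hj Hmj Hje k Hk.
  replace (K * (m k - c)) with (K * (m k - m j) + K * (m j - c)) by ring.
  pose proof (m_mono j k Hk). pose proof (m_near_c k ltac:(lia)).
  apply (angle_within_trans d _ (tau j)); try (apply tau_unit; lia);
    try (apply angle_within_sym, tangent_spread; lia); try assumption; nra.
Qed.

Lemma central_direction :
  (0 < n)%nat ->
  exists e, dot d e e = 1 /\
    forall k, (k < n)%nat -> angle_within d (tau k) e (K * (m k - c)).
Proof.
  intros Hn.
  destruct (Rle_dec c (m O)) as [Hc0 | Hc0].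
  { exists (tau O). split; [apply tau_unit; lia|]. intros k Hk.
    apply (pivot_forward (tau O) O); [apply tau_unit; lia | lia | lra | | lia].
    apply angle_within_refl, tau_unit; lia. }
  destruct (Rle_dec (m (n - 1)%nat) c) as [Hcn | Hcn].
  { exists (tau (n - 1)%nat). split; [apply tau_unit; lia|]. intros k Hk.
    apply (pivot_backward (tau (n - 1)%nat) (n - 1)); [apply tau_unit; lia | lia | lra | | lia].
    apply angle_within_refl, tau_unit; lia. }
  destruct (crossing_index m c (n - 1) ltac:(lra) ltac:(lra)) as [j [Hj [Hmj HmSj]]].
  pose proof (m_near_c j ltac:(lia)). pose proof (m_near_c (S j) ltac:(lia)).
  destruct (angle_within_split d (tau j) (tau (S j)) (K * (c - m j)) (K * (m (S j) - c)))
    as [e [He [Hej HeSj]]]; try (apply tau_unit; lia); try nra.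
  { replace (K * (c - m j) + K * (m (S j) - c)) with (K * (m (S j) - m j)) by ring.
    apply tau_turn; lia. }
  exists e. split; [exact He|]. intros k Hk.
  destruct (Nat.le_gt_cases k j) as [Hkj | Hkj].
  - apply (pivot_backward e j); [exact He | lia | exact Hmj | | exact Hkj].
    apply angle_within_sym; exact Hej.
  - apply (pivot_forward e (S j)); [exact He | lia | exact HmSj | | lia].
    apply angle_within_sym; exact HeSj.
Qed.

End CentralDirection.

(* The chord of an arc of curvature K over [a_0, a_n], split along the
   subdivision a_0 <= ... <= a_n: with the identity
   sin (x + h) - sin (x - h) = 2 sin h cos x at each midpoint x. *)
Lemma sine_telescope (a : nat -> R) K c n :
  K <> 0 ->
  sumd n (fun k => 2 * sin (K * (a (S k) - a k) / 2) * cos (K * ((a k + a (S k)) / 2 - c)) / K)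
  = (sin (K * (a n - c)) - sin (K * (a O - c))) / K.
Proof.
  intros HK.
  pose proof (sumd_telescope n (fun k => sin (K * (a k - c)) / K)) as T. cbv beta in T.
  replace ((sin (K * (a n - c)) - sin (K * (a O - c))) / K)
    with (sin (K * (a n - c)) / K - sin (K * (a O - c)) / K) by (field; exact HK).
  rewrite <- T. apply sumd_ext. intros k _.
  set (x := K * ((a k + a (S k)) / 2 - c)). set (h := K * (a (S k) - a k) / 2).
  replace (K * (a (S k) - c)) with (x + h) by (unfold x, h; field).
  replace (K * (a k - c)) with (x - h) by (unfold x, h; field).
  rewrite sin_plus, sin_minus. field. exact HK.
Qed.

Lemma arc_chord_lt_length K l co :
  0 < K -> 0 < l -> 0 < co -> 2 * sin (K * l / 2) * co / K < l * co.
Proof.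
  intros HK Hl Hco.
  assert (Hs : sin (K * l / 2) < K * l / 2) by (apply sin_lt_x; nra).
  apply (Rmult_lt_reg_r K); [exact HK|].
  replace (2 * sin (K * l / 2) * co / K * K) with (2 * sin (K * l / 2) * co) by (field; lra).
  nra.
Qed.

Definition seg_len (a : nat -> R) (k : nat) : R := a (S k) - a k.
Definition seg_mid (a : nat -> R) (k : nat) : R := (a k + a (S k)) / 2.
Definition seg_dir (y : nat -> vec) (a : nat -> R) (k : nat) : vec :=
  fun i => / seg_len a k * vsub (y (S k)) (y k) i.

Lemma norm_vsub_sym d u v : norm d (vsub u v) = norm d (vsub v u).
Proof. unfold norm, dot, vsub. f_equal. apply sumd_ext. intros; ring. Qed.

Lemma dot_chord_telescope d n (y : nat -> vec) e :
  dot d (vsub (y n) (y O)) e = sumd n (fun k => dot d (vsub (y (S k)) (y k)) e).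
Proof.
  unfold dot. rewrite <- sumd_swap. apply sumd_ext. intros i _.
  pose proof (sumd_telescope n (fun k => y k i)) as T. cbv beta in T.
  unfold vsub. rewrite <- T, Rmult_comm, <- sumd_scal.
  apply sumd_ext. intros. ring.
Qed.

Lemma maxCurv_aux_ge d y M k :
  (k < M)%nat -> kappa_d2 d (y k) (y (S k)) (y (S (S k))) <= maxCurv_aux d y M.
Proof.
  induction M as [|M IH]; intros Hk; [lia|]. simpl.
  destruct (Nat.eq_dec k M) as [E | NE]; [subst; apply Rmax_r|].
  eapply Rle_trans; [apply IH; lia | apply Rmax_l].
Qed.

Section Polygon.

Variables (d n : nat) (y : nat -> vec) (a : nat -> R) (K L : R).
Hypothesis K_pos : 0 < K.
Hypothesis KL_le_PI : K * L <= PI.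
Hypothesis a_start : a O = 0.
Hypothesis a_end : a n = L.
Hypothesis a_incr : forall k, (k < n)%nat -> a k < a (S k).
Hypothesis side_len : forall k, (k < n)%nat -> norm d (vsub (y (S k)) (y k)) = a (S k) - a k.
Hypothesis curv_le : maxCurv2 d n y <= K.

Lemma a_mono j k : (j <= k <= n)%nat -> a j <= a k.
Proof.
  intros [Hjk Hkn]. induction Hjk as [|k Hjk IH]; [lra|].
  pose proof (a_incr k Hkn). pose proof (IH ltac:(lia)). lra.
Qed.

Lemma a_range k : (k <= n)%nat -> 0 <= a k <= L.
Proof. intros Hk. rewrite <- a_start, <- a_end. split; apply a_mono; lia. Qed.

Lemma seg_len_pos k : (k < n)%nat -> 0 < seg_len a k.
Proof. intros Hk. unfold seg_len. pose proof (a_incr k Hk). lra. Qed.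

Lemma seg_dir_unit k : (k < n)%nat -> dot d (seg_dir y a k) (seg_dir y a k) = 1.
Proof.
  intros Hk. pose proof (seg_len_pos k Hk) as Hl.
  pose proof (side_len k Hk) as Hn. unfold norm in Hn. fold (seg_len a k) in Hn.
  unfold seg_dir. rewrite dot_scal_l, dot_comm, dot_scal_l.
  rewrite <- (sqrt_sqrt (dot d _ _)) by apply dot_nonneg. rewrite Hn. field. lra.
Qed.

Lemma seg_mid_step k : (S k < n)%nat -> seg_mid a k <= seg_mid a (S k).
Proof.
  intros Hk. unfold seg_mid. pose proof (a_incr k ltac:(lia)). pose proof (a_incr (S k) Hk). lra.
Qed.

Lemma seg_mid_centered k : (k < n)%nat -> - (PI / 2) < K * (seg_mid a k - L / 2) < PI / 2.
Proof.
  intros Hk. unfold seg_mid.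
  pose proof (a_incr k Hk). pose proof (a_range k ltac:(lia)). pose proof (a_range (S k) Hk).
  split; nra.
Qed.

Lemma seg_dir_turn k :
  (S k < n)%nat ->
  angle_within d (seg_dir y a k) (seg_dir y a (S k)) (K * (seg_mid a (S k) - seg_mid a k)).
Proof.
  intros Hk.
  pose proof (seg_len_pos k ltac:(lia)) as Hl. pose proof (seg_len_pos (S k) Hk) as Hl'.
  assert (Hkappa : kappa_d2 d (y k) (y (S k)) (y (S (S k))) <= K).
  { unfold maxCurv2 in curv_le. pose proof (maxCurv_aux_ge d y (n - 1) k ltac:(lia)). lra. }
  unfold kappa_d2, angle in Hkappa.
  rewrite (norm_vsub_sym d (y k)), !side_len in Hkappa by lia. fold (seg_len a k) (seg_len a (S k)) in Hkappa.
  replace (dot d (vsub (y (S k)) (y k)) (vsub (y (S (S k))) (y (S k))) /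
           (seg_len a k * seg_len a (S k)))
    with (dot d (seg_dir y a k) (seg_dir y a (S k))) in Hkappa
    by (unfold seg_dir; rewrite dot_scal_l, dot_comm, dot_scal_l, dot_comm; field; lra).
  set (h := (seg_len a k + seg_len a (S k)) / 2) in Hkappa.
  assert (Hmid : seg_mid a (S k) - seg_mid a k = h) by (unfold h, seg_mid, seg_len; field).
  set (x := dot d (seg_dir y a k) (seg_dir y a (S k))) in Hkappa.
  assert (Hacos : acos x <= K * h).
  { replace (acos x) with (acos x / h * h) by (unfold h; field; lra).
    apply Rmult_le_compat_r; [unfold h; lra | exact Hkappa]. }
  rewrite Hmid. apply cos_le_of_acos_le; [| exact Hacos |].
  - apply unit_dot_bound; apply seg_dir_unit; lia.
  - pose proof (a_range k ltac:(lia)). pose proof (a_range (S (S k)) Hk).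
    unfold h, seg_len. nra.
Qed.

(* The polygon is strictly longer in chord than the arc of curvature K and
   length L: project both on the central direction e; segment k contributes
   len_k <tau_k, e> >= len_k cos (K (mid_k - L/2)), which exceeds the
   contribution 2 sin (K len_k / 2) cos (K (mid_k - L/2)) / K of the arc. *)
Lemma polygon_chord_gt : 0 < L -> 2 * sin (K * L / 2) / K < norm d (vsub (y n) (y O)).
Proof.
  intros L_pos.
  assert (Hn : (0 < n)%nat) by (destruct n; [lra | lia]).
  destruct (central_direction d n (seg_dir y a) (seg_mid a) K (L / 2) ltac:(lra)
              seg_dir_unit seg_mid_step seg_mid_centered seg_dir_turn Hn) as [e [He Hdir]].
  assert (Harc : 2 * sin (K * L / 2) / K =
    sumd n (fun k => 2 * sin (K * seg_len a k / 2) * cos (K * (seg_mid a k - L / 2)) / K)).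
  { unfold seg_len, seg_mid. rewrite sine_telescope, a_end, a_start by lra.
    replace (K * (L - L / 2)) with (K * L / 2) by field.
    replace (K * (0 - L / 2)) with (- (K * L / 2)) by field.
    rewrite sin_neg. field. lra. }
  assert (Hpoly : dot d (vsub (y n) (y O)) e = sumd n (fun k => seg_len a k * dot d (seg_dir y a k) e)).
  { rewrite dot_chord_telescope. apply sumd_ext. intros k Hk.
    unfold seg_dir. rewrite dot_scal_l. pose proof (seg_len_pos k Hk). field. lra. }
  pose proof (dot_unit_le_norm d (vsub (y n) (y O)) e He).
  enough (sumd n (fun k => 2 * sin (K * seg_len a k / 2) * cos (K * (seg_mid a k - L / 2)) / K)
          < sumd n (fun k => seg_len a k * dot d (seg_dir y a k) e)) by lra.
  apply sumd_lt; [exact Hn|]. intros k Hk.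
  pose proof (seg_len_pos k Hk). pose proof (seg_mid_centered k Hk).
  assert (Hcos : 0 < cos (K * (seg_mid a k - L / 2))) by (apply cos_gt_0; lra).
  pose proof (arc_chord_lt_length K (seg_len a k) _ K_pos ltac:(lra) Hcos).
  pose proof (Hdir k Hk) as Hk'. unfold angle_within in Hk'. nra.
Qed.

End Polygon.

Lemma circle_chord d K L eta :
  0 < L -> 0 < K -> K * L <= PI ->
  is_arclength_circle_arc d K L eta -> norm d (vsub (eta L) (eta 0)) = 2 * sin (K * L / 2) / K.
Proof.
  intros HL HK HKL [c0 [e1 [e2 [th0 [H1 [H2 [H12 Heta]]]]]]].
  set (A := th0 + K * L). set (B := th0 + K * 0).
  set (w := fun i => (cos A - cos B) / K * e1 i + (sin A - sin B) / K * e2 i).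
  assert (Ew : dot d (vsub (eta L) (eta 0)) (vsub (eta L) (eta 0)) = dot d w w).
  { unfold dot. apply sumd_ext. intros i Hi. unfold vsub, w.
    rewrite (Heta L i), (Heta 0 i) by (auto; lra). fold A B. field. lra. }
  assert (Hsq : (cos A - cos B) ^ 2 + (sin A - sin B) ^ 2 = (2 * sin (K * L / 2)) ^ 2).
  { pose proof (sin2_cos2 A). pose proof (sin2_cos2 B). unfold Rsqr in *.
    assert (cos A * cos B + sin A * sin B = cos (K * L))
      by (rewrite <- cos_minus; f_equal; unfold A, B; ring).
    assert (cos (K * L) = 1 - 2 * sin (K * L / 2) * sin (K * L / 2))
      by (rewrite <- cos_2a_sin; f_equal; field).
    nra. }
  assert (Hpos : 0 <= 2 * sin (K * L / 2) / K).
  { assert (0 <= sin (K * L / 2)) by (apply sin_ge_0; pose proof PI_RGT_0; nra).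
    apply Rmult_le_pos; [lra | left; apply Rinv_0_lt_compat; lra]. }
  unfold norm. rewrite Ew. unfold w. rewrite dot_lin2, H1, H2, H12, (dot_comm d e2 e1), H12.
  rewrite <- (sqrt_pow2 _ Hpos). f_equal.
  replace ((2 * sin (K * L / 2) / K) ^ 2) with ((2 * sin (K * L / 2)) ^ 2 / (K * K)) by (field; lra).
  rewrite <- Hsq. field. lra.
Qed.

Theorem proposition6 (d n : nat) (L K : R) (a : nat -> R) (p eta : R -> vec) :
  0 < L -> 0 < K ->
  is_arclength_polygon d n a L p ->
  maxCurv2 d n (fun k => p (a k)) <= K ->
  K * L <= PI ->
  is_arclength_circle_arc d K L eta ->
  norm d (vsub (eta L) (eta 0)) < norm d (vsub (p L) (p 0)).
Proof.
  intros HL HK [Ha0 [Han [Hinc [Hlen _]]]] Hcurv HKL Hcirc.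
  rewrite (circle_chord d K L eta HL HK HKL Hcirc).
  pose proof (polygon_chord_gt d n (fun k => p (a k)) a K L HK HKL Ha0 Han Hinc Hlen Hcurv HL)
    as Hpoly.
  cbv beta in Hpoly. rewrite Han, Ha0 in Hpoly. exact Hpoly.
Qed.
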